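(* Let $\mu$ be a log-concave probability measure on $\mathbb R^n$ and let $\psi:\mathbb R^n\to\mathbb R$ be a convex map with $\psi\in L_1(\mu)$. Let $Z\sim\mu$, $F(t)=\mathbb P(\psi(Z)\leqslant t)$, $t\in\mathbb R$, and $f=F'$. Then $$f(m)\geqslant\frac{1}{32\,\|(\psi-m)_+\|_{L_1(\mu)}},$$ where $m$ is a median of $\psi$ with respect to $\mu$.
   Context: $(x)_+=\max\{x,0\}$. *)

From HB Require Import structures.
From mathcomp Require Import all_boot all_order all_algebra.
From mathcomp Require Import all_classical all_reals all_analysis.
Set Implicit Arguments. Unset Strict Implicit. Unset Printing Implicit Defensive.
Import Order.TTheory GRing.Theory Num.Theory.
Import numFieldNormedType.Exports.
Local Open Scope classical_set_scope.
Local Open Scope ring_scope.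

Definition borelRV (R : realType) (n : nat) :=
  g_sigma_algebraType (@open 'rV[R]_n).

Definition mink_comb (R : realType) (n : nat) (l : R)
    (A B : set 'rV[R]_n) : set 'rV[R]_n :=
  [set z | exists a b, A a /\ B b /\ z = l *: a + (1 - l) *: b].

Definition log_concave (R : realType) (n : nat)
    (mu : probability (borelRV R n) R) : Prop :=
  forall (A B : set 'rV[R]_n) (l : R), compact A -> compact B ->
    0 < l < 1 ->
    fine (mu A) `^ l * fine (mu B) `^ (1 - l)
      <= fine (mu (mink_comb l A B : set (borelRV R n))).

Definition convex_fun (R : realType) (n : nat) (psi : 'rV[R]_n -> R) : Prop :=
  forall (x y : 'rV[R]_n) (l : R), 0 <= l <= 1 ->
    psi (l *: x + (1 - l) *: y) <= l * psi x + (1 - l) * psi y.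

Definition distrF (R : realType) (n : nat) (mu : probability (borelRV R n) R)
    (psi : 'rV[R]_n -> R) (t : R) : R :=
  fine (mu ([set x | psi x <= t] : set (borelRV R n))).

Definition is_median (R : realType) (n : nat) (mu : probability (borelRV R n) R)
    (psi : 'rV[R]_n -> R) (m : R) : Prop :=
  ((2^-1)%:E <= mu ([set x | (psi x <= m)%R] : set (borelRV R n)))%E /\
  ((2^-1)%:E <= mu ([set x | (m <= psi x)%R] : set (borelRV R n)))%E.

Definition L1_pos_part (R : realType) (n : nat) (mu : probability (borelRV R n) R)
    (psi : 'rV[R]_n -> R) (m : R) : R :=
  fine (\int[mu]_(x in [set: borelRV R n]) (Num.max (psi x - m) 0)%:E)%E.

From HB Require Import structures.
From mathcomp Require Import all_boot all_order all_algebra.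
From mathcomp Require Import all_classical all_reals all_analysis.
From mathcomp Require Import measurable_realfun ring lra.
Import Order.TTheory GRing.Theory Num.Theory.
Import numFieldNormedType.Exports.
Local Open Scope classical_set_scope.
Local Open Scope ring_scope.
Set Implicit Arguments.
Unset Strict Implicit.

(* The distribution function F of psi(Z) is log-concave: compact subsets of two
   sublevel sets have, by convexity of psi, their Minkowski combination inside the
   sublevel set at the combined level, and sublevel sets are closed (a convex
   function is locally bounded above, hence lower semicontinuous), so they are
   exhausted by compact sets.  The median gives F(m) = 1/2, the upper bound by
   continuity of F at m.  For g > F'(m) and small h > 0 we have
   F(m - h) > 1/2 - g h; log-concavity at the levels m - h < m < m + 1/(8g) then
   forces F(m + 1/(8g)) <= 3/4, and Markov's inequality for (psi - m)_+ yields
   ||(psi - m)_+||_1 >= 1/(8g) * 1/4 = 1/(32g). *)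

Lemma ln_ge_1BV (R : realType) (y : R) : 0 < y -> 1 - y^-1 <= ln y.
Proof.
move=> y0; have yV0 : 0 < y^-1 by rewrite invr_gt0.
have := @le_ln1Dx R (y^-1 - 1); rewrite addrCA subrr addr0 lnV ?posrE //.
by rewrite lerNl opprB => ->; lra.
Qed.

Lemma half_lt_powR_mix (R : realType) (u : R) : 0 < u <= 1/16 ->
  2^-1 < (3/4) `^ (8 * u / (1 + 8 * u)) * (2^-1 - u) `^ (1 - 8 * u / (1 + 8 * u)).
Proof.
move=> /andP[u0 u16]; set l := 8 * u / _.
have b0 : 0 < 2^-1 - u by lra.
rewrite /powR !gt_eqF // -expRD -ltr_ln ?posrE ?expR_gt0 // expRK.
have -> : 3/4 = 2^-1 * (3/2) :> R by field.
have -> : 2^-1 - u = 2^-1 * (1 - 2 * u) :> R by field.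
rewrite [ln (2^-1 * (3/2))]lnM ?[ln (2^-1 * (1 - _))]lnM ?posrE //; try lra.
have A : 1/3 <= ln (3/2 : R).
  have -> : 1/3 = 1 - (3/2)^-1 :> R by field.
  by apply: ln_ge_1BV; lra.
set w := (1 - 2 * u)^-1.
have w1 : w * (1 - 2 * u) = 1 by rewrite mulVf //; lra.
have B : 1 - w <= ln (1 - 2 * u) by apply: ln_ge_1BV; lra.
have w43 : w < 4/3.
  have w0 : 0 < w by rewrite invr_gt0; lra.
  have : 0 <= w * (1/16 - u) by apply: mulr_ge0; lra.
  nra.
set a := ln (3/2) in A *; set b := ln (1 - 2 * u) in B *.
suff : 0 < (1 + 8 * u) * (l * a + (1 - l) * b) by rewrite pmulr_rgt0; lra.
have -> : (1 + 8 * u) * (l * a + (1 - l) * b) = 8 * u * a + b by rewrite /l; field; lra.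
have : 0 < u * (4/3 - w) by apply: mulr_gt0; lra.
nra.
Qed.

Lemma derivable1_left_lt (R : realType) (F : R -> R) (x g : R) :
  derivable F x 1 -> derive1 F x < g ->
  \forall h \near 0^'+, F x - g * h < F (x - h).
Proof.
move=> dF fg; set f := derive1 F x in fg *.
have : (fun h : R => h^-1 *: ((F \o shift x) (h *: 1) - F x)) @ 0^' --> f.
  by rewrite /f derive1E; exact: dF.
move=> /cvgrPdist_lt /(_ ((g - f) / 2)); rewrite divr_gt0 ?subr_gt0 // => /(_ isT).
move=> /nbhs_normP[d d0 near_f]; near=> h.
have h0 : 0 < h by near: h; exact: nbhs_right_gt.
have hd : h < d by near: h; exact: nbhs_right_lt.
have := near_f (- h); rewrite /ball_ /= sub0r !normrN gtr0_norm // oppr_eq0 gt_eqF //.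
move=> /(_ hd isT); rewrite /= -[(- h)%:A]/(- h * 1) mulr1 [- h + x]addrC.
set q := (- h)^-1 *: _; rewrite ltr_distlC => /andP[_ fq].
have -> : F (x - h) = F x - h * q by rewrite /q -[_ *: _]/(_ * _); field; rewrite gt_eqF.
rewrite ltrD2l ltrN2 (mulrC g) ltr_pM2l //; lra.
Unshelve. all: by end_near.
Qed.

Lemma nondecreasing_derive1_ge0 (R : realType) (F : R -> R) (x : R) :
  {homo F : s t / s <= t} -> derivable F x 1 -> 0 <= derive1 F x.
Proof.
move=> F_homo dF; rewrite leNgt; apply/negP => f_lt0.
have /filter_ex[h [h0 Fh]] : \forall h \near 0^'+, 0 < h /\
    F x - derive1 F x / 2 * h < F (x - h).
  near=> h; split; near: h; first exact: nbhs_right_gt.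
  by apply: derivable1_left_lt => //; rewrite ltr_pdivlMr //; lra.
have := F_homo (x - h) x; rewrite gerBl (ltW h0) => /(_ isT).
have : derive1 F x / 2 * h < 0 by rewrite pmulr_llt0 // pmulr_llt0.
lra.
Unshelve. all: by end_near.
Qed.

Lemma mx_norm_entry_le (R : realType) (p q : nat) (u : 'M[R]_(p, q)) i j :
  `|u i j| <= `|u|.
Proof.
rewrite -[`|u|]/(mx_norm u) mx_normrE; apply/bigmax_geP; right => /=.
by exists (i, j).
Qed.

Section ConvexFunction.
Variable R : realType.
Implicit Types (n : nat).

Lemma convex_fun_le_max n (psi : 'rV[R]_n -> R) (x v : 'rV[R]_n) (c : R) :
  convex_fun psi -> `|c| <= 1 ->
  psi (x + c *: v) <= Num.max (psi (x + v)) (psi (x - v)).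
Proof.
move=> psi_cvx; rewrite ler_norml => /andP[c_ge c_le].
set l := (1 + c) / 2.
have l01 : 0 <= l <= 1 by rewrite /l; lra.
have -> : x + c *: v = l *: (x + v) + (1 - l) *: (x - v).
  by apply/rowP => j; rewrite !mxE /l; field.
apply: le_trans (psi_cvx _ _ _ l01) _; move: l01 => /andP[l0 l1].
set M := Num.max _ _.
have : psi (x + v) <= M by rewrite le_max lexx.
have : psi (x - v) <= M by rewrite le_max lexx orbT.
nra.
Qed.

Lemma convex_fun_mean n (psi : 'rV[R]_n -> R) N (p : 'I_N.+1 -> 'rV[R]_n) :
  convex_fun psi -> psi (N.+1%:R^-1 *: \sum_i p i) <= N.+1%:R^-1 * \sum_i psi (p i).
Proof.
move=> psi_cvx; elim: N p => [|N IH] p; first by rewrite !big_ord1 invr1 scale1r mul1r.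
rewrite big_ord_recr [X in _ <= _ * X]big_ord_recr /=.
set S := \sum_(i < N.+1) _; set T := \sum_(i < N.+1) _.
have N0 : (0 : R) <= N%:R := ler0n R N.
have N2 : (N.+2%:R : R) = N.+1%:R + 1 by rewrite -natr1.
set l := (N.+1%:R : R) / N.+2%:R.
have l01 : 0 <= l <= 1.
  by rewrite /l divr_ge0 ?ler_pdivrMr ?ltr0n //= mul1r ler_nat.
have -> : N.+2%:R^-1 *: (S + p ord_max) = l *: (N.+1%:R^-1 *: S) + (1 - l) *: p ord_max.
  by rewrite scalerA scalerDr /l N2; congr (_ *: _ + _ *: _); field; rewrite ?gt_eqF; lra.
apply: le_trans (psi_cvx _ _ _ l01) _.
have -> : N.+2%:R^-1 * (T + psi (p ord_max)) =
    l * (N.+1%:R^-1 * T) + (1 - l) * psi (p ord_max).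
  by rewrite /l N2; field; rewrite ?gt_eqF; lra.
move: l01 => /andP[l0 _]; rewrite lerD2r ler_wpM2l //.
exact: (IH (fun i => p (widen_ord (leqnSn N.+1) i))).
Qed.

Lemma convex_fun_ub_ball n (psi : 'rV[R]_n -> R) (x : 'rV[R]_n) :
  convex_fun psi -> exists M, forall u, `|u| <= 1 -> psi (x + u) <= M.
Proof.
case: n psi x => [|N] psi x psi_cvx.
  by exists (psi x) => u _; rewrite [u]thinmx0 addr0.
(* x + u is the average of the points x + u_i (N+1) e_i, with |u_i| <= 1 *)
set v := fun i : 'I_N.+1 => N.+1%:R *: ('e_i : 'rV[R]_N.+1).
set M := \sum_i (`|psi (x + v i)| + `|psi (x - v i)|).
have summand_le i : `|psi (x + v i)| + `|psi (x - v i)| <= M.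
  by rewrite /M (bigD1 i) //= lerDl sumr_ge0.
exists M => u u_le1.
have -> : x + u = N.+1%:R^-1 *: \sum_i (x + u 0 i *: v i).
  rewrite big_split /= sumr_const card_ord -[x *+ N.+1]scaler_nat.
  have -> : \sum_i u 0 i *: v i = N.+1%:R *: u.
    rewrite [in RHS](row_sum_delta u) scaler_sumr; apply: eq_bigr => i _.
    by rewrite /v !scalerA mulrC.
  by rewrite scalerDr !scalerA mulVf ?pnatr_eq0 // !scale1r.
apply: le_trans (convex_fun_mean (fun i => x + u 0 i *: v i) psi_cvx) _.
rewrite ler_pdivrMl ?ltr0n // mulr_natl.
apply: (@le_trans _ _ (\sum_(i < N.+1) M)); last by rewrite sumr_const card_ord.
apply: ler_sum => i _; have ui_le1 := le_trans (mx_norm_entry_le u 0 i) u_le1.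
apply: le_trans (convex_fun_le_max x (v i) psi_cvx ui_le1) _.
have := summand_le i; have := ler_norm (psi (x + v i)); have := ler_norm (psi (x - v i)).
have := normr_ge0 (psi (x + v i)); have := normr_ge0 (psi (x - v i)).
by rewrite ge_max; move=> *; apply/andP; split; lra.
Qed.

Lemma convex_fun_lb_ball n (psi : 'rV[R]_n -> R) (x : 'rV[R]_n) (M e : R) (u : 'rV[R]_n) :
  convex_fun psi -> (forall w, `|w| <= 1 -> psi (x + w) <= M) ->
  0 < e <= 1 -> `|u| <= e -> psi x - e * (M - psi x) <= psi (x + u).
Proof.
move=> psi_cvx psi_ub /andP[e0 e1] u_le.
set w := - (e^-1 *: u).
have w_le1 : `|w| <= 1.
  by rewrite normrN normrZ ger0_norm ?invr_ge0 ?(ltW e0) // mulrC ler_pdivrMr // mul1r.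
set l := (1 + e)^-1.
have l01 : 0 <= l <= 1 by rewrite /l invr_ge0 invf_le1 /=; lra.
have x_mix : x = l *: (x + u) + (1 - l) *: (x + w).
  by apply/rowP => j; rewrite !mxE /l; field; rewrite !gt_eqF; lra.
have := psi_cvx (x + u) (x + w) l l01; rewrite -x_mix.
have mix_e : (1 + e) * (l * psi (x + u) + (1 - l) * psi (x + w)) =
    psi (x + u) + e * psi (x + w) by rewrite /l; field; rewrite gt_eqF //; lra.
move=> /(ler_wpM2l (_ : 0 <= 1 + e)); rewrite mix_e => /(_ ltac:(lra)).
have : e * psi (x + w) <= e * M by rewrite ler_wpM2l ?psi_ub // ltW.
nra.
Qed.

Lemma closed_convex_sublevel n (psi : 'rV[R]_n -> R) (t : R) :
  convex_fun psi -> closed [set x | psi x <= t].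
Proof.
move=> psi_cvx; rewrite -[X in closed X]setCK; apply: open_closedC.
rewrite openE => x /= /negP; rewrite -ltNge => t_lt.
have [M psi_ub] := convex_fun_ub_ball x psi_cvx.
have D0 : 0 <= M - psi x by have := psi_ub 0; rewrite normr0 addr0 => /(_ ler01); lra.
set e := Num.min 1 ((psi x - t) / (2 * (M - psi x) + 2)).
have e01 : 0 < e <= 1 by rewrite /e lt_min ge_min lexx ltr01 divr_gt0 //=; lra.
have eD : e * (M - psi x) < psi x - t.
  apply: (@le_lt_trans _ _ ((psi x - t) / (2 * (M - psi x) + 2) * (M - psi x))).
    by apply: ler_wpM2r => //; rewrite /e ge_min lexx orbT.
  rewrite mulrAC ltr_pdivrMr; nra.
apply/nbhs_ballP; exists e; first by case/andP: e01.
move=> y /=; rewrite mx_norm_ball /ball_ /= => /ltW; rewrite distrC => y_near.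
have := convex_fun_lb_ball psi_cvx psi_ub e01 y_near.
by rewrite addrCA subrr addr0; lra.
Qed.
End ConvexFunction.

Section BorelSets.
Variables (R : realType) (n : nat).

Lemma closed_measurable (A : set 'rV[R]_n) : closed A -> measurable (A : set (borelRV R n)).
Proof.
move=> cA; rewrite -(setCK A); apply: measurableC.
by apply: sub_sigma_algebra; exact: closed_openC.
Qed.

Lemma compact_mink_comb (l : R) (A B : set 'rV[R]_n) :
  compact A -> compact B -> compact (mink_comb l A B).
Proof.
move=> cA cB.
have -> : mink_comb l A B = (fun p => l *: p.1 + (1 - l) *: p.2) @` (A `*` B).
  apply/seteqP; split => [z [a [b [Aa [Bb ->]]]]|z [[a b] [/= Aa Bb] <-]].
    by exists (a, b).
  by exists a, b.
apply: continuous_compact; last exact: compact_setX.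
apply: continuous_subspaceT => p.
apply: (@continuousD _ _ _ (fun p : 'rV[R]_n * 'rV[R]_n => l *: p.1)).
  by apply: (@continuousZl_tmp _ _ _ fst); exact: cvg_fst.
by apply: (@continuousZl_tmp _ _ _ snd); exact: cvg_snd.
Qed.

Lemma compact_setI_closed_ball (K : set 'rV[R]_n) (r : R) : closed K -> 0 < r ->
  compact (K `&` closed_ball 0 r).
Proof.
move=> cK r0; apply: bounded_closed_compact; last first.
  by apply: closedI => //; exact: closed_ball_closed.
exists r; split; first by rewrite num_real.
move=> M r_lt x [_]; rewrite closed_ballE // /closed_ball_ /= sub0r normrN => x_le.
exact: le_trans x_le (ltW r_lt).
Qed.

End BorelSets.

Section BorelProbability.
Variables (R : realType) (n : nat) (mu : probability (borelRV R n) R).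

Lemma probability_fineE (A : set (borelRV R n)) : measurable A -> mu A = (fine (mu A))%:E.
Proof. by move=> mA; rewrite fineK // fin_num_measure. Qed.

Lemma le_fine_probability (A B : set (borelRV R n)) :
  measurable A -> measurable B -> A `<=` B -> fine (mu A) <= fine (mu B).
Proof.
move=> mA mB AB; rewrite -lee_fin -!probability_fineE //.
by apply: le_measure => //; rewrite inE.
Qed.

Lemma closed_inner_compact (K : set 'rV[R]_n) (a : R) :
  closed K -> a < fine (mu K) ->
  exists A, [/\ compact A, A `<=` K & a < fine (mu A)].
Proof.
move=> cK a_lt.
pose C k := (K `&` closed_ball 0 k.+1%:R : set (borelRV R n)).
have mC k : measurable (C k).
  by apply: closed_measurable; apply: closedI => //; exact: closed_ball_closed.
have C_cup : \bigcup_k C k = K.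
  apply/seteqP; split => [x [k _ []] //|x Kx].
  exists (Num.truncn `|x|) => //; split => //.
  rewrite closed_ballE ?ltr0n // /closed_ball_ /= sub0r normrN.
  exact: ltW (truncnS_gt _).
have C_nd : nondecreasing_seq C.
  move=> i j ij; apply/subsetPset => x [Kx].
  rewrite /C !closed_ballE ?ltr0n // /closed_ball_ /= => x_le.
  by split => //; apply: le_trans x_le _; rewrite ler_nat.
have mK := closed_measurable cK.
have mC_cup : measurable (\bigcup_k C k) by rewrite C_cup.
have := nondecreasing_cvg_mu mC mC_cup C_nd; rewrite C_cup => C_cvg.
have /C_cvg[k _ a_lt_C] : nbhs (mu K) [set y | (a%:E < y)%E].
  apply: open_nbhs_nbhs; split; first exact: open_ereal_gt_ereal.
  by rewrite /= probability_fineE // lte_fin.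
exists (C k); split; first exact: compact_setI_closed_ball.
  by move=> x [].
by rewrite -lte_fin -probability_fineE //; apply: a_lt_C => /=.
Qed.

End BorelProbability.

Section DistributionFunction.
Variables (R : realType) (n : nat) (mu : probability (borelRV R n) R).
Variable psi : 'rV[R]_n -> R.
Hypothesis psi_meas : measurable_fun [set: borelRV R n] psi.
Hypotheses (mu_lc : log_concave mu) (psi_cvx : convex_fun psi).

Local Notation F := (distrF mu psi).

Lemma measurable_sublevel (t : R) : measurable ([set x | psi x <= t] : set (borelRV R n)).
Proof.
have := psi_meas measurableT (measurable_itv `]-oo, t]); rewrite setTI.
by congr measurable; apply/seteqP; split => x /=; rewrite in_itv.
Qed.

Lemma measurable_superlevel (t : R) : measurable ([set x | t <= psi x] : set (borelRV R n)).
Proof.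
have := psi_meas measurableT (measurable_itv `[t, +oo[); rewrite setTI.
by congr measurable; apply/seteqP; split => x /=; rewrite in_itv /= andbT.
Qed.

Lemma le_distrF : {homo F : s t / s <= t}.
Proof.
move=> s t st; apply: le_fine_probability (measurable_sublevel s) (measurable_sublevel t) _.
by move=> x /= /le_trans; apply.
Qed.

Section Median.
Variable m : R.
Hypothesis m_median : is_median mu psi m.

Lemma median_half_le_distrF : 2^-1 <= F m.
Proof.
by have := m_median.1; rewrite probability_fineE ?lee_fin //; exact: measurable_sublevel.
Qed.

Lemma median_distrF_lt_le_half (s : R) : s < m -> F s <= 2^-1.
Proof.
move=> sm.
have disj : [set x | psi x <= s] `&` [set x | m <= psi x] = set0.
  by apply/seteqP; split => x //= [? ?]; lra.
have mS := measurable_sublevel s; have mT := measurable_superlevel m.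
have : F s + fine (mu [set x | m <= psi x]) <= 1.
  rewrite -lee_fin EFinD -(probability_fineE mu mS) -(probability_fineE mu mT).
  by rewrite -(measureU mu mS mT disj) probability_le1 //; exact: measurableU.
by have := m_median.2; rewrite (probability_fineE mu mT) lee_fin; lra.
Qed.

Lemma median_distrF_le_half : derivable F m 1 -> F m <= 2^-1.
Proof.
move=> F_der; rewrite leNgt; apply/negP => half_lt; set g := derive1 F m + 1.
have /filter_ex[h [h0 h_lt Fh]] : \forall h \near 0^'+,
    [/\ 0 < h, h < (F m - 2^-1) / (`|g| + 1) & F m - g * h < F (m - h)].
  near=> h; split; near: h; first exact: nbhs_right_gt.
    by apply: nbhs_right_lt; rewrite divr_gt0 ?subr_gt0 //; have := normr_ge0 g; lra.
  by apply: derivable1_left_lt => //; rewrite /g; lra.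
have := median_distrF_lt_le_half (_ : m - h < m); rewrite gtrBl => /(_ h0).
have g1 : 0 < `|g| + 1 by have := normr_ge0 g; lra.
rewrite ltr_pdivlMr // mulrDr mulr1 mulrC in h_lt.
have : g * h <= `|g| * h by rewrite ler_wpM2r ?ler_norm // ltW.
lra.
Unshelve. all: by end_near.
Qed.
End Median.

Lemma integrable_pos_part_sub (m : R) :
  mu.-integrable [set: borelRV R n] (fun x => (psi x)%:E) ->
  mu.-integrable [set: borelRV R n] (fun x => (Num.max (psi x - m) 0)%:E).
Proof.
move=> psi_int.
have cst_int := finite_measure_integrable_cst mu m (@measurableT _ (borelRV R n)).
apply: (le_integrable measurableT _ _ (integrableB measurableT psi_int cst_int)).
  apply/measurable_EFinP; apply: measurable_maxr; last exact: measurable_cst.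
  exact: measurable_funB psi_meas (measurable_cst m).
move=> x _; rewrite /= lee_fin ger0_norm; last by rewrite le_max lexx orbT.
by rewrite ge_max ler_norm normr_ge0.
Qed.

Lemma tail_le_L1_pos_part (m t : R) :
  mu.-integrable [set: borelRV R n] (fun x => (psi x)%:E) -> m <= t ->
  (t - m) * (1 - F t) <= L1_pos_part mu psi m.
Proof.
move=> psi_int mt; set S := [set x | psi x <= t].
have mS : measurable (S : set (borelRV R n)) := measurable_sublevel t.
have mSC : measurable (~` S : set (borelRV R n)) := measurableC mS.
have -> : 1 - F t = fine (mu (~` S : set (borelRV R n))).
  by rewrite probability_setC // (probability_fineE mu mS) -EFinB.
have pos_int := integrable_pos_part_sub m psi_int.
rewrite /L1_pos_part -lee_fin fineK; last exact: integrable_fin_num pos_int.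
rewrite EFinM -(probability_fineE mu mSC) -[X in (_ * mu X)%E]setIT.
have m_ind : measurable_fun [set: borelRV R n] (fun x => (\1_(~` S) x : R)%:E).
  by apply/measurable_EFinP; exact: measurable_indic.
rewrite -integral_indic // -ge0_integralZl_EFin ?subr_ge0 //.
apply: ge0_le_integral => //.
- by move=> x _; rewrite lee_fin mulr_ge0 ?subr_ge0 // indicE ler0n.
- exact: emeasurable_funM (measurable_cst _) m_ind.
- by case/integrableP: pos_int.
move=> x _; rewrite lee_fin indicE; case: (boolP (x \in _)) => [/set_mem /= /negP|_].
  by rewrite -ltNge mulr1 le_max => /ltW; rewrite lerD2r => ->.
by rewrite mulr0 le_max lexx orbT.
Qed.

Lemma distrF_powR_mix (l s t a b : R) : 0 < l < 1 -> 0 <= a < F t -> 0 <= b < F s ->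
  a `^ l * b `^ (1 - l) <= F (l * t + (1 - l) * s).
Proof.
move=> l01 /andP[a0 a_lt] /andP[b0 b_lt]; have /andP[l0 l1] := l01.
have [A [cA A_sub a_lt_A]] := closed_inner_compact (closed_convex_sublevel psi_cvx) a_lt.
have [B [cB B_sub b_lt_B]] := closed_inner_compact (closed_convex_sublevel psi_cvx) b_lt.
have mix_sub : mink_comb l A B `<=` [set x | psi x <= l * t + (1 - l) * s].
  move=> _ [x [y [/A_sub Ax [/B_sub By ->]]]] /=.
  have l01' : 0 <= l <= 1 by rewrite !ltW.
  apply: le_trans (psi_cvx x y l01') _.
  by rewrite lerD // ler_wpM2l // ?subr_ge0 ltW.
have A_ge : a `^ l <= fine (mu A) `^ l.
  apply: ge0_ler_powR; rewrite ?nnegrE //; first exact: ltW.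
    exact: le_trans a0 (ltW a_lt_A).
  exact: ltW.
have B_ge : b `^ (1 - l) <= fine (mu B) `^ (1 - l).
  apply: ge0_ler_powR; rewrite ?nnegrE ?subr_ge0 //; first exact: ltW.
    exact: le_trans b0 (ltW b_lt_B).
  exact: ltW.
apply: le_trans (ler_pM (powR_ge0 _ _) (powR_ge0 _ _) A_ge B_ge) _.
apply: le_trans (mu_lc cA cB l01) _.
apply: le_fine_probability mix_sub.
  exact: closed_measurable (compact_closed _ (compact_mink_comb cA cB)).
exact: closed_measurable (closed_convex_sublevel psi_cvx).
Qed.

Lemma distrF_le_three_quarters (m g h : R) : F m <= 2^-1 -> 0 < g -> 0 < h ->
  g * h <= 1/16 -> 2^-1 - g * h < F (m - h) -> F (m + (8 * g)^-1) <= 3/4.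
Proof.
move=> Fm_le g0 h0 gh_le Fh; rewrite leNgt; apply/negP => F_gt.
set u := g * h in gh_le Fh; have u0 : 0 < u by rewrite mulr_gt0.
(* the weight that makes m the l-combination of the levels m + 1/(8g) and m - h *)
set l := 8 * u / (1 + 8 * u).
have l01 : 0 < l < 1 by rewrite /l ltr_pdivrMr ?divr_gt0 /=; lra.
have m_mix : l * (m + (8 * g)^-1) + (1 - l) * (m - h) = m.
  by rewrite /l /u; field; rewrite gt_eqF ?gt_eqF //; nra.
have a_lt : (0 : R) <= 3/4 < F (m + (8 * g)^-1) by apply/andP; split; lra.
have b_lt : 0 <= 2^-1 - u < F (m - h) by apply/andP; split; lra.
have := distrF_powR_mix l01 a_lt b_lt; rewrite m_mix.
have := @half_lt_powR_mix R u; rewrite u0 gh_le => /(_ isT).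
lra.
Qed.

Lemma inv_le_L1_pos_part (m g : R) :
  mu.-integrable [set: borelRV R n] (fun x => (psi x)%:E) -> is_median mu psi m ->
  derivable F m 1 -> derive1 F m < g -> (32 * g)^-1 <= L1_pos_part mu psi m.
Proof.
move=> psi_int m_median F_der f_lt_g.
have g0 : 0 < g := le_lt_trans (nondecreasing_derive1_ge0 le_distrF F_der) f_lt_g.
have /filter_ex[h [h0 h_lt Fh]] : \forall h \near 0^'+,
    [/\ 0 < h, h < (16 * g)^-1 & F m - g * h < F (m - h)].
  near=> h; split; near: h; first exact: nbhs_right_gt.
    by apply: nbhs_right_lt; rewrite invr_gt0 mulr_gt0.
  exact: derivable1_left_lt.
have gh_le : g * h <= 1/16.
  by rewrite -ler_pdivlMl // mul1r -invfM mulrC; apply: ltW.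
have Fmh : 2^-1 - g * h < F (m - h) by have := median_half_le_distrF m_median; lra.
have t_le := distrF_le_three_quarters (median_distrF_le_half m_median F_der) g0 h0 gh_le Fmh.
have mt : m <= m + (8 * g)^-1 by rewrite lerDl invr_ge0 mulr_ge0 // ltW.
apply: le_trans (tail_le_L1_pos_part psi_int mt); rewrite addrAC subrr add0r.
have -> : (32 * g)^-1 = (8 * g)^-1 * (1 - 3/4) by field; rewrite gt_eqF.
by apply: ler_wpM2l; [rewrite invr_ge0 mulr_ge0 // ltW | lra].
Unshelve. all: by end_near.
Qed.

End DistributionFunction.

Theorem lemma5p4 (R : realType) (n : nat) (mu : probability (borelRV R n) R)
    (psi : 'rV[R]_n -> R) (m : R) :
  log_concave mu ->
  convex_fun psi ->
  mu.-integrable [set: borelRV R n] (fun x => (psi x)%:E) ->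
  is_median mu psi m ->
  derivable (distrF mu psi) m 1 ->
  1 / (32 * L1_pos_part mu psi m) <= derive1 (distrF mu psi) m.
Proof.
move=> mu_lc psi_cvx psi_int m_median F_der.
have psi_meas : measurable_fun [set: borelRV R n] psi.
  by apply/measurable_EFinP; exact: measurable_int psi_int.
have f_ge0 := nondecreasing_derive1_ge0 (le_distrF mu psi_meas) F_der.
have L_ge := inv_le_L1_pos_part psi_meas mu_lc psi_cvx psi_int m_median F_der.
set f := derive1 _ m in f_ge0 L_ge *; set L := L1_pos_part mu psi m in L_ge *.
have L0 : 0 < L.
  by apply: lt_le_trans (L_ge (f + 1) _); rewrite ?invr_gt0 ?mulr_gt0 //; lra.
apply/ler_addgt0Pr => e e0; have := L_ge (f + e) ltac:(lra).
by rewrite -div1r !ler_pdivrMr ?mulr_gt0 //; lra.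
Qed.
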